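(* Let $k\ge 1$ be the cache size. In both the discard-predictions setup and the phase-predictions setup, there is no deterministic online paging algorithm that is $(\alpha,\beta,\gamma)$-competitive with either $\alpha+\beta<k$ or $\alpha+(k-1)\gamma<k$.
   Context: Paging: there is a universe $U$ of pages and a cache holding at most $k$ pages, initially empty. Requests $r_1,\dots,r_n\in U$ arrive online. If the requested page is not in the cache (a page fault), it must be loaded, evicting a cached page if the cache holds $k$ pages. The cost is the number of page faults; $\mathrm{OPT}(I)$ is the minimum offline cost on request sequence $I$. Along with each request $r_i$ the online algorithm receives a prediction bit $p_i\in\{0,1\}$ (which may be arbitrary). An algorithm is $(\alpha,\beta,\gamma)$-competitive (with $\alpha,\beta,\gamma\ge0$) if there is a constant $b$ (possibly depending on $k$) such that for every instance $I$ and all predictions $p$, $\mathrm{ALG}(I,p)\le \alpha\,\mathrm{OPT}(I)+\beta\,\eta_0+\gamma\,\eta_1+b$. Discard-predictions setup: fix the optimal offline algorithm LFD (on a fault with full cache, evict a cached page never requested again if one exists, otherwise the cached page whose next request is furthest in the future; ties broken by a fixed rule). Ground truth: $p_i^*=0$ if LFD keeps $r_i$ in cache until its next request (or to the end if none), $p_i^*=1$ if LFD evicts $r_i$ before it is requested again. Errors: $\eta_h=|\{i\in[n]: p_i=h,\ p_i^*=1-h\}|$. Phase-predictions setup: partition the requests into $k$-phases (the first starts at $r_1$; each phase is a maximal contiguous segment with at most $k$ distinct pages; the next starts right after). For $r_i$ in phase $j$: $p_i^*=0$ if page $r_i$ is requested in phase $j+1$, else $p_i^*=1$. Errors: $\eta_h$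 = number of counted requests $i$ with $p_i=h$, $p_i^*=1-h$, where counted requests are, for each non-last phase $j$ and each page requested in phase $j$, only the last request to that page within phase $j$. *)

From mathcomp Require Import all_boot.
From Stdlib Require Import Reals.

Set Implicit Arguments.
Unset Strict Implicit.
Unset Printing Implicit Defensive.

(* Pages are natural numbers (universe U = nat).  An instance is a request
   sequence I : seq nat; predictions are p : nat -> bool, p i being the
   prediction bit attached to request I_i (0-indexed). *)

(* On a fault with a full cache, the algorithm chooses the page to     *)
(* evict from the history of (request, prediction) pairs seen so far   *)
(* (including the current one) and the current cache content.  If the  *)
(* returned page is not cached, the head of the cache is evicted       *)
(* (any total function thus encodes a legal strategy, and every legal  *)
(* deterministic strategy is encoded by some function).                *)
Definition Alg := seq (nat * bool) -> seq nat -> nat.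

Definition evict (cache : seq nat) (c : nat) : seq nat :=
  if c \in cache then rem c cache else behead cache.

Fixpoint alg_run (k : nat) (A : Alg) (hist : seq (nat * bool))
    (cache : seq nat) (rest : seq (nat * bool)) : nat :=
  match rest with
  | [::] => 0
  | rp :: rest' =>
      let h := rcons hist rp in
      if rp.1 \in cache then alg_run k A h cache rest'
      else (alg_run k A h
              (rp.1 :: (if size cache < k then cache else evict cache (A h cache)))
              rest').+1
  end.

Definition alg_cost (k : nat) (A : Alg) (I : seq nat) (p : nat -> bool) : nat :=
  alg_run k A [::] [::] (zip I (map p (iota 0 (size I)))).

Fixpoint opt_from (k : nat) (cache : seq nat) (I : seq nat) : nat :=
  match I with
  | [::] => 0
  | r :: I' =>
      if r \in cache then opt_from k cache I'
      else if size cache < k then (opt_from k (r :: cache) I').+1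
      else (foldr minn (opt_from k (r :: behead cache) I')
                  (map (fun c => opt_from k (r :: rem c cache) I') cache)).+1
  end.

Definition OPT (k : nat) (I : seq nat) : nat := opt_from k [::] I.

(* LFD with a fixed tie-breaking rule tb.  tb I j cands chooses, at     *)
(* time j on instance I, among the cached pages cands never requested  *)
(* again (arbitrary fixed rule; a non-candidate answer defaults to the *)
(* first candidate).                                                   *)
Definition TieRule := seq nat -> nat -> seq nat -> nat.

Definition furthest (cache fut : seq nat) : nat :=
  foldr (fun c best => if index best fut < index c fut then c else best)
        (head 0 cache) cache.

Definition lfd_victim (tb : TieRule) (I : seq nat) (j : nat)
    (cache fut : seq nat) : nat :=
  let nev := [seq c <- cache | c \notin fut] in
  if nev != [::] then
    (let c := tb I j nev in if c \in nev then c else head 0 nev)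
  else furthest cache fut.

Fixpoint lfd_run (k : nat) (tb : TieRule) (I : seq nat) (j : nat)
    (cache : seq nat) (rest : seq nat) : seq (option nat) :=
  match rest with
  | [::] => [::]
  | r :: fut =>
      if r \in cache then None :: lfd_run k tb I j.+1 cache fut
      else if size cache < k then None :: lfd_run k tb I j.+1 (r :: cache) fut
      else let v := lfd_victim tb I j cache fut in
           Some v :: lfd_run k tb I j.+1 (r :: rem v cache) fut
  end.

Definition lfd_evictions (k : nat) (tb : TieRule) (I : seq nat) :=
  lfd_run k tb I 0 [::] I.

(* index of the next request to page I_i after i, or size I if none *)
Definition next_req (I : seq nat) (i : nat) : nat :=
  i.+1 + index (nth 0 I i) (drop i.+1 I).

(* discard ground truth: true (=1) iff LFD evicts r_i strictly between i
   and its next request (or the end of the sequence if none). *)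
Definition discard_truth (k : nat) (tb : TieRule) (I : seq nat) (i : nat) : bool :=
  let ev := lfd_evictions k tb I in
  has (fun j => (i < j) && (j < next_req I i) && (nth None ev j == Some (nth 0 I i)))
      (iota 0 (size I)).

Definition eta_discard (k : nat) (tb : TieRule) (I : seq nat) (p : nat -> bool)
    (h : bool) : nat :=
  count (fun i => (p i == h) && (discard_truth k tb I i == ~~ h)) (iota 0 (size I)).

(* k-phases.  phase_ids gives, for each request, the index of its phase *)
(* (greedy maximal segments with at most k distinct pages).            *)
Fixpoint phase_run (k : nat) (cur : seq nat) (ph : nat) (rest : seq nat) : seq nat :=
  match rest with
  | [::] => [::]
  | r :: rest' =>
      if r \in cur then ph :: phase_run k cur ph rest'
      else if size cur < k then ph :: phase_run k (r :: cur) ph rest'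
      else ph.+1 :: phase_run k [:: r] ph.+1 rest'
  end.

Definition phase_ids (k : nat) (I : seq nat) : seq nat := phase_run k [::] 0 I.

Definition phase_of (k : nat) (I : seq nat) (i : nat) : nat := nth 0 (phase_ids k I) i.

(* phase ground truth: false (=0) iff page r_i is requested in the next phase *)
Definition phase_truth (k : nat) (I : seq nat) (i : nat) : bool :=
  ~~ has (fun i' => (phase_of k I i' == (phase_of k I i).+1) && (nth 0 I i' == nth 0 I i))
         (iota 0 (size I)).

Definition counted (k : nat) (I : seq nat) (i : nat) : bool :=
  (phase_of k I i < phase_of k I (size I).-1) &&
  ~~ has (fun i' => (i < i') && (phase_of k I i' == phase_of k I i)
                    && (nth 0 I i' == nth 0 I i))
         (iota 0 (size I)).

Definition eta_phase (k : nat) (I : seq nat) (p : nat -> bool) (h : bool) : nat :=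
  count (fun i => counted k I i && (p i == h) && (phase_truth k I i == ~~ h))
        (iota 0 (size I)).

Definition competitive (k : nat) (A : Alg)
    (eta : seq nat -> (nat -> bool) -> bool -> nat) (a bt g : R) : Prop :=
  exists b : R, forall (I : seq nat) (p : nat -> bool),
    (INR (alg_cost k A I p) <=
       a * INR (OPT k I) + bt * INR (eta I p false) + g * INR (eta I p true) + b)%R.

(* The adversary keeps requesting a page of {0, ..., k} that is missing from the
   algorithm's cache, so the algorithm faults on all n requests, while the
   predictions are constant.  On k + 1 pages LFD evicts at most once every k
   requests, hence OPT <= k + S with k S <= n + k, S being the number of LFD
   evictions.  With all predictions 0, the discard errors are the requests
   evicted by LFD (at most S), and the phase errors number at most one per
   phase, since a full phase misses a single page of {0, ..., k}.  With all
   predictions 1, the discard errors are the requests kept by LFD (at most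
   n - S + k + 1, each being followed by an LFD hit), and the phase errors
   number at most k - 1 per phase.  Either way competitiveness would give
   k n <= (a + bt) n + O(1) or k n <= (a + (k - 1) g) n + O(1).  For a < 1,
   perfect predictions on n distinct pages already give n <= a n + O(1). *)

From mathcomp Require Import all_boot zify.
From Stdlib Require Import Reals Lra.

Set Implicit Arguments.
Unset Strict Implicit.
Unset Printing Implicit Defensive.

(** * Counting by injections *)

Lemma count_iota_le_inj (P Q : pred nat) (f : nat -> nat) n m e :
  (forall i j, i < j < n -> P i -> P j -> f i != f j) ->
  (forall i, i < n -> P i -> (f i < m) && Q (f i) || (m <= f i < m + e)) ->
  count P (iota 0 n) <= count Q (iota 0 m) + e.
Proof.
move=> f_inj f_in; pose R j := (j < m) && Q j || (m <= j).
have -> : count Q (iota 0 m) = count R (iota 0 m).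
  apply: eq_in_count => j; rewrite mem_iota /R => /andP[_ jm].
  by rewrite jm leqNgt jm orbF.
apply: (@leq_trans (count R (iota 0 (m + e)))); last first.
  by rewrite iotaD count_cat add0n leq_add2l -[leqRHS](size_iota m) count_size.
rewrite -!size_filter -(size_map f); apply: uniq_leq_size.
  rewrite map_inj_in_uniq ?filter_uniq ?iota_uniq // => i j.
  rewrite !mem_filter !mem_iota => /andP[Pi /andP[_ ilt]] /andP[Pj /andP[_ jlt]] fij.
  case: (ltngtP i j) => [ij|ji|//].
    by have := f_inj i j; rewrite ij jlt fij eqxx => /(_ isT Pi Pj).
  by have := f_inj j i; rewrite ji ilt fij eqxx => /(_ isT Pj Pi).
move=> y /mapP[i]; rewrite mem_filter mem_iota => /andP[Pi /andP[_ ilt]] ->.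
rewrite mem_filter mem_iota /R add0n.
case/orP: (f_in i ilt Pi) => [/andP[fm ->]|/andP[mf fe]].
  by rewrite fm ltn_addr.
by rewrite mf orbT fe.
Qed.

Lemma find_iotaP (P : pred nat) n : has P (iota 0 n) ->
  [/\ find P (iota 0 n) < n, P (find P (iota 0 n))
    & forall j, j < find P (iota 0 n) -> ~~ P j].
Proof.
move=> has_P; have lt : find P (iota 0 n) < n.
  by rewrite -[n in _ < n](size_iota 0) -has_find.
split=> //; first by have := nth_find 0 has_P; rewrite nth_iota.
move=> j jlt; have := before_find 0 jlt; rewrite nth_iota ?add0n => [->//|].
exact: ltn_trans jlt lt.
Qed.

Lemma full_cache_misses_one k (c : seq nat) x y :
  uniq c -> all (fun z => z <= k) c -> size c = k ->
  x \notin c -> y \notin c -> x <= k -> y <= k -> x = y.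
Proof.
move=> uc /allP ck sz xc yc xk yk; apply/eqP/negPn/negP => xy.
have sub : {subset c <= rem x (iota 0 k.+1)}.
  move=> z zc; rewrite (mem_rem_uniq _ (iota_uniq _ _)) inE mem_iota ltnS ck //.
  by apply/andP; split=> //; apply/eqP => zx; rewrite -zx zc in xc.
have size_le : size (rem x (iota 0 k.+1)) <= size c.
  by rewrite size_rem ?mem_iota // size_iota sz.
have [_ /(_ y)] := uniq_min_size uc sub size_le.
by rewrite (mem_rem_uniq _ (iota_uniq _ _)) inE mem_iota eq_sym xy (negbTE yc) /= ltnS yk.
Qed.

Lemma map_const_nseq (T U : Type) (y : U) (s : seq T) :
  map (fun=> y) s = nseq (size s) y.
Proof. by elim: s => //= x s ->. Qed.

Lemma count_iota_nth (T : Type) (x0 : T) (a : pred T) (s : seq T) :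
  count (fun j => a (nth x0 s j)) (iota 0 (size s)) = count a s.
Proof. by rewrite -[in RHS](mkseq_nth x0 s) /mkseq count_map. Qed.

Lemma ltn_next_req (I : seq nat) i : i < next_req I i.
Proof. exact: leq_addr. Qed.

Lemma nth_next_req (I : seq nat) i :
  next_req I i < size I -> nth 0 I (next_req I i) = nth 0 I i.
Proof.
rewrite /next_req -nth_drop => lt; apply: nth_index; by rewrite -index_mem size_drop ltn_subRL.
Qed.

Lemma next_req_le (I : seq nat) i j :
  i < j -> nth 0 I j = nth 0 I i -> next_req I i <= j.
Proof.
move=> ij eq_ij; rewrite leqNgt; apply/negP => lt.
have : j - i.+1 < index (nth 0 I i) (drop i.+1 I) by move: lt; rewrite /next_req; lia.
by move/(before_find 0); rewrite /= nth_drop subnKC // eq_ij eqxx.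
Qed.

(** * The cruel adversary *)

Definition missing_page k (cache : seq nat) : nat :=
  find (fun x => x \notin cache) (iota 0 k.+1).

Lemma missing_pageP k cache :
  size cache <= k -> missing_page k cache \notin cache /\ missing_page k cache <= k.
Proof.
move=> sz; suff /find_iotaP[] : has (fun x => x \notin cache) (iota 0 k.+1) by [].
apply: contraLR sz => /hasPn all_cached; rewrite -ltnNge -[k.+1](size_iota 0).
by apply: uniq_leq_size (iota_uniq _ _) _ => x /all_cached /negPn.
Qed.

Definition fault_cache k (A : Alg) (hist : seq (nat * bool)) (cache : seq nat) r :=
  r :: (if size cache < k then cache else evict cache (A hist cache)).

Lemma size_evict cache c : size (evict cache c) = (size cache).-1.
Proof. by rewrite /evict; case: ifP => [/size_rem|_]; rewrite ?size_behead. Qed.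

Lemma size_fault_cache k A hist cache r :
  0 < k -> size cache <= k -> size (fault_cache k A hist cache r) <= k.
Proof.
move=> k_gt0 sz; rewrite /fault_cache /=; case: (ltnP (size cache) k) => //= ksz.
by rewrite size_evict prednK // (leq_trans k_gt0 ksz).
Qed.

Fixpoint cruel_seq k (A : Alg) (q : bool) n hist cache : seq nat :=
  if n is n'.+1 then
    let r := missing_page k cache in
    let h := rcons hist (r, q) in
    r :: cruel_seq k A q n' h (fault_cache k A h cache r)
  else [::].

Lemma cruel_seqP k A q n hist cache : 0 < k -> size cache <= k ->
  [/\ size (cruel_seq k A q n hist cache) = n,
      all (fun x => x <= k) (cruel_seq k A q n hist cache)
    & alg_run k A hist cache (zip (cruel_seq k A q n hist cache) (nseq n q)) = n].
Proof.
move=> k_gt0; elim: n hist cache => [|n IH] hist cache sz //=.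
have [miss miss_le] := missing_pageP sz.
set r := missing_page k cache; set h := rcons hist (r, q).
have [-> all_le run] := IH h _ (@size_fault_cache k A h cache r k_gt0 sz).
by rewrite miss_le all_le (negbTE miss) run.
Qed.

Lemma cruel_instance k A q n : 0 < k ->
  exists I, [/\ size I = n, all (fun x => x <= k) I & alg_cost k A I (fun=> q) = n].
Proof.
move=> k_gt0; have [sz all_le run] := @cruel_seqP k A q n [::] [::] k_gt0 (leq0n k).
by exists (cruel_seq k A q n [::] [::]); rewrite /alg_cost map_const_nseq size_iota sz.
Qed.

Lemma alg_run_distinct k A hist cache (rest : seq (nat * bool)) :
  uniq (unzip1 rest) -> {in unzip1 rest, forall x, x \notin cache} ->
  alg_run k A hist cache rest = size rest.
Proof.
elim: rest hist cache => [|[r b] rest IH] hist cache //= /andP[r_new uniq_rest] fresh.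
rewrite (negbTE (fresh r (mem_head _ _))); congr _.+1; apply: IH => // x x_rest.
rewrite inE negb_or (memPn r_new) //=.
have x_fresh : x \notin cache by apply: fresh; rewrite inE x_rest orbT.
case: ifP => // _; rewrite /evict; case: ifP => _.
  by apply: contra x_fresh => /mem_rem.
by apply: contra x_fresh => /mem_behead.
Qed.

Lemma alg_cost_iota k A n p : alg_cost k A (iota 0 n) p = n.
Proof.
rewrite /alg_cost alg_run_distinct ?size_zip ?size_map ?size_iota ?minnn //.
by rewrite unzip1_zip ?size_map ?iota_uniq.
Qed.

Lemma opt_from_le_size k cache I : opt_from k cache I <= size I.
Proof.
elim: I cache => [|r I IH] cache //=.
case: ifP => _; first exact: leq_trans (IH _) _.
case: ifP => _; rewrite ltnS //.
by elim: (map _ _) => //= y s IHs; rewrite geq_min IHs orbT.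
Qed.

(** * Longest forward distance *)

Lemma furthestP (cache fut : seq nat) : cache != [::] ->
  furthest cache fut \in cache /\
  {in cache, forall c, index c fut <= index (furthest cache fut) fut}.
Proof.
case: cache => [|x0 cache] // _; rewrite /furthest [head _ _]/=.
set step := fun c best => if index best fut < index c fut then c else best.
suff inv (s : seq nat) y0 : [/\ foldr step y0 s \in y0 :: s,
    index y0 fut <= index (foldr step y0 s) fut
  & {in s, forall c, index c fut <= index (foldr step y0 s) fut}].
  have [y_in _ y_max] := inv (x0 :: cache) x0; split=> //.
  by move: y_in; rewrite inE => /orP[/eqP->|]; rewrite ?mem_head.
elim: s => [|c s [y_in y0_le y_max]] /=; first by rewrite mem_head.
move: y_in y0_le y_max; set y := foldr step y0 s => y_in y0_le y_max.
rewrite /step; case: ltnP => [lt|ge].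
  split; [by rewrite !inE eqxx orbT | exact: leq_trans y0_le (ltnW lt) |].
  by move=> c'; rewrite inE => /orP[/eqP-> //|/y_max le]; apply: leq_trans le (ltnW lt).
split=> //; first by move: y_in; rewrite !inE => /orP[->|->]; rewrite ?orbT.
by move=> c'; rewrite inE => /orP[/eqP->|/y_max].
Qed.

Lemma furthest_index_ge (cache fut : seq nat) v :
  uniq cache -> v \in cache -> {in cache, forall c, index c fut <= index v fut} ->
  index v fut < size fut -> (size cache).-1 <= index v fut.
Proof.
move=> uc v_in v_max; rewrite index_mem => v_fut.
have sub : {subset rem v cache <= take (index v fut) fut}.
  move=> c; rewrite (mem_rem_uniq _ uc) inE => /andP[c_v c_in].
  have c_le := v_max c c_in.
  have c_fut : c \in fut by rewrite -index_mem (leq_ltn_trans c_le) ?index_mem.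
  rewrite in_take // ltn_neqAle c_le andbT.
  by apply: contra c_v => /eqP eq_idx; rewrite -(nth_index 0 c_fut) eq_idx nth_index.
rewrite -(size_rem v_in); apply: leq_trans (uniq_leq_size (rem_uniq _ uc) sub) _.
by rewrite size_take; case: ltnP => // /ltnW.
Qed.

Lemma foldr_minn_map_le (f : nat -> nat) x0 (s : seq nat) v :
  v \in s -> foldr minn x0 (map f s) <= f v.
Proof.
elim: s => [|y s IH] //=; rewrite inE => /orP[/eqP->|/IH le]; first exact: geq_minl.
exact: leq_trans (geq_minr _ _) le.
Qed.

Section LFDRun.
Variables (k : nat) (tb : TieRule) (I : seq nat).
Hypothesis k_gt0 : 0 < k.

Lemma lfd_victimP j cache fut : cache != [::] ->
  lfd_victim tb I j cache fut \in cache /\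
  {in cache, forall c, index c fut <= index (lfd_victim tb I j cache fut) fut}.
Proof.
move=> cache_ne; rewrite /lfd_victim /=.
set nev := [seq c <- cache | c \notin fut].
have nevP v : v \in nev -> v \in cache /\ {in cache, forall c, index c fut <= index v fut}.
  rewrite mem_filter => /andP[v_new v_in]; split=> // c _.
  by rewrite (memNindex v_new) index_size.
case: ifP => [nev_ne|_]; last exact: furthestP.
case: ifP => [|_]; first exact: nevP.
by apply: nevP; case: nev nev_ne => //= x s _; rewrite mem_head.
Qed.

Lemma opt_from_le_lfd_run rest j cache : size cache <= k ->
  opt_from k cache rest <= (k - size cache) + count isSome (lfd_run k tb I j cache rest).
Proof.
elim: rest j cache => [|r fut IH] j cache sz //=.
case: ifP => r_in; first exact: IH.
case: ifP => not_full; first by have := IH j.+1 (r :: cache) not_full; rewrite /=; lia.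
have cache_ne : cache != [::] by apply: contraFneq not_full => ->.
have [v_in _] := lfd_victimP j fut cache_ne.
set v := lfd_victim _ _ _ _ _ in v_in *.
have sz' : size (r :: rem v cache) = size cache.
  by rewrite /= size_rem // prednK // lt0n size_eq0.
have := IH j.+1 (r :: rem v cache); rewrite sz' => /(_ sz) le.
rewrite [count _ _]/= add1n addnS ltnS.
exact: leq_trans (foldr_minn_map_le _ _ v_in) le.
Qed.

Lemma size_lfd_run j cache rest : size (lfd_run k tb I j cache rest) = size rest.
Proof.
by elim: rest j cache => [|r fut IH] j cache //=; do 2?case: ifP => _; rewrite /= IH.
Qed.

Lemma lfd_run_hits m j cache rest : {subset take m rest <= cache} ->
  count isSome (lfd_run k tb I j cache rest) =
  count isSome (lfd_run k tb I (j + m) cache (drop m rest)).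
Proof.
elim: m j rest => [|m IH] j [|r fut] hits //=; rewrite ?addn0 //.
rewrite hits ?mem_head //= addnS -addSn; apply: IH => y y_in.
by apply: hits; rewrite inE y_in orbT.
Qed.

(* Once LFD has evicted the furthest page v, its cache holds every page but v,
   so all requests before the next one to v are hits, and the other k - 1 cached
   pages are all requested among them. *)
Lemma lfd_run_spacing rest j cache :
  uniq cache -> all (fun x => x <= k) cache -> size cache <= k ->
  all (fun x => x <= k) rest ->
  k * count isSome (lfd_run k tb I j cache rest) <= size rest + k.-1.
Proof.
move: {2}(size rest) (leqnn (size rest)) => N.
elim: N rest j cache => [|N IH] [|r fut] j cache //=; rewrite ?muln0 //.
rewrite ltnS => fut_N uc ck sz /andP[rk futk].
have IHfut j' c := IH fut j' c fut_N.
case: ifP => r_in /=.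
  by rewrite add0n (leq_trans (IHfut j.+1 cache uc ck sz futk)) // leq_add2r.
case: ifP => not_full /=.
  have uc' : uniq (r :: cache) by rewrite /= r_in uc.
  have ck' : all (fun x => x <= k) (r :: cache) by rewrite /= rk ck.
  by rewrite add0n (leq_trans (IHfut j.+1 (r :: cache) uc' ck' not_full futk)) // leq_add2r.
have cache_ne : cache != [::] by apply: contraFneq not_full => ->.
have [v_in v_max] := lfd_victimP j fut cache_ne.
set v := lfd_victim _ _ _ _ _ in v_in v_max *.
set cache' := r :: rem v cache; set m := index v fut.
have sz_k : size cache = k by apply/eqP; rewrite eqn_leq sz leqNgt not_full.
have uc' : uniq cache' by rewrite /= rem_uniq // andbT; apply: contraFN r_in => /mem_rem.
have ck' : all (fun x => x <= k) cache'.
  by rewrite /= rk; apply/allP => x /mem_rem /(allP ck).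
have sz' : size cache' = k by rewrite /= size_rem // sz_k prednK.
have v_out : v \notin cache'.
  by rewrite inE mem_rem_uniqF // orbF; apply: contraFneq r_in => <-.
have hits : {subset take m fut <= cache'}.
  move=> y y_take; apply/negPn/negP => y_out.
  have yk : y <= k by apply: (allP futk); exact: mem_take y_take.
  have vk : v <= k by apply: (allP ck).
  have y_v := full_cache_misses_one uc' ck' sz' y_out v_out yk vk.
  move: y_take; rewrite y_v; case v_fut: (v \in fut); first by rewrite in_take // ltnn.
  by move/mem_take; rewrite v_fut.
have drop_N : size (drop m fut) <= N by rewrite size_drop (leq_trans (leq_subr _ _)).
have drop_k : all (fun x => x <= k) (drop m fut).
  by apply/allP => x /mem_drop /(allP futk).
have := IH _ (j.+1 + m) _ drop_N uc' ck' (eq_leq sz') drop_k.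
rewrite (lfd_run_hits _ hits) mulnDr muln1 size_drop.
case: (ltnP m (size fut)) => [m_lt|m_ge].
  have := furthest_index_ge uc v_in v_max m_lt; rewrite sz_k -/m.
  move: m_lt; set c := count _ _; set n := size fut; lia.
by rewrite drop_oversize //= muln0 addn0 => _; lia.
Qed.

End LFDRun.

Lemma lfd_evictions_bounds k tb I : 0 < k -> all (fun x => x <= k) I ->
  OPT k I <= k + count isSome (lfd_evictions k tb I) /\
  k * count isSome (lfd_evictions k tb I) <= size I + k.
Proof.
move=> k_gt0 Ik; split.
  by have := @opt_from_le_lfd_run k tb I k_gt0 I 0 [::] (leq0n k); rewrite subn0.
apply: leq_trans (@lfd_run_spacing k tb I k_gt0 I 0 [::] _ _ _ Ik) _ => //.
by rewrite leq_add2l leq_pred.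
Qed.

Lemma OPT_kS_pages_le k I : 0 < k -> all (fun x => x <= k) I ->
  k * OPT k I <= size I + k * k.+1.
Proof.
move=> k_gt0 Ik; have [] := lfd_evictions_bounds (fun _ _ _ => 0) k_gt0 Ik.
set S := count _ _ => opt_le spacing.
by rewrite mulnS; apply: leq_trans (leq_mul (leqnn k) opt_le) _; lia.
Qed.

(** * Discard predictions *)

Section LFDState.
Variables (k : nat) (tb : TieRule) (I : seq nat).

Definition lfd_eviction t (cache : seq nat) : option nat :=
  if (nth 0 I t \in cache) || (size cache < k) then None
  else Some (lfd_victim tb I t cache (drop t.+1 I)).

Definition lfd_next t (cache : seq nat) : seq nat :=
  if nth 0 I t \in cache then cache
  else if size cache < k then nth 0 I t :: cache
  else nth 0 I t :: rem (lfd_victim tb I t cache (drop t.+1 I)) cache.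

Fixpoint lfd_cache t : seq nat :=
  if t is t'.+1 then lfd_next t' (lfd_cache t') else [::].

Lemma lfd_run_cache d j : size I = j + d ->
  lfd_run k tb I j (lfd_cache j) (drop j I) =
  [seq lfd_eviction t (lfd_cache t) | t <- iota j d].
Proof.
elim: d j => [|d IH] j sz; first by rewrite drop_oversize // sz addn0.
rewrite (drop_nth 0) ?sz /=; last lia.
rewrite -IH /=; last by rewrite sz addnS.
by rewrite /lfd_eviction /lfd_next; case: ifP => //=; case: ifP.
Qed.

Lemma nth_lfd_evictions t : t < size I ->
  nth None (lfd_evictions k tb I) t = lfd_eviction t (lfd_cache t).
Proof.
move=> lt; rewrite /lfd_evictions -[I in lfd_run _ _ _ _ _ I]drop0.
by rewrite (@lfd_run_cache (size I)) // (nth_map 0) ?size_iota // nth_iota.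
Qed.

Lemma lfd_cache_uniq t : uniq (lfd_cache t).
Proof.
elim: t => [|t IH] //=; rewrite /lfd_next; case: ifP => // r_out.
case: ifP => _ /=; rewrite ?rem_uniq ?IH ?andbT ?r_out //.
by apply: contraFN r_out => /mem_rem.
Qed.

Lemma lfd_next_keep t x : x \in lfd_cache t -> lfd_eviction t (lfd_cache t) != Some x ->
  x \in lfd_next t (lfd_cache t).
Proof.
rewrite /lfd_eviction /lfd_next => x_in.
case: (nth 0 I t \in _) => //=; case: (size _ < k) => /= x_kept.
  by rewrite inE x_in orbT.
have x_v : x != lfd_victim tb I t (lfd_cache t) (drop t.+1 I).
  by apply: contraNneq x_kept => ->.
by rewrite inE (mem_rem_uniq _ (lfd_cache_uniq t)) inE x_v x_in orbT.
Qed.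

Lemma mem_lfd_next t : nth 0 I t \in lfd_next t (lfd_cache t).
Proof. by rewrite /lfd_next; case: ifP => // _; case: ifP => _; rewrite mem_head. Qed.

Lemma discard_truthP i :
  reflect (exists2 j, i < j < next_req I i &
             nth None (lfd_evictions k tb I) j = Some (nth 0 I i))
          (discard_truth k tb I i).
Proof.
apply: (iffP hasP) => [[j _ /andP[/andP[ij jn] /eqP ev_j]]|[j /andP[ij jn] ev_j]].
  by exists j; rewrite ?ij.
have j_lt : j < size I.
  rewrite ltnNge; apply/negP => ge.
  by move: ev_j; rewrite nth_default // /lfd_evictions size_lfd_run.
by exists j; rewrite ?mem_iota ?ij ?jn ?ev_j ?eqxx.
Qed.

Lemma cached_until_next_req i t : ~~ discard_truth k tb I i ->
  i < t <= next_req I i -> t <= size I -> nth 0 I i \in lfd_cache t.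
Proof.
move=> kept; elim: t => [|t IH] // /andP[it tn] t_lt /=.
rewrite ltnS leq_eqVlt in it; case/orP: it => [/eqP->|ti]; first exact: mem_lfd_next.
apply: lfd_next_keep; first by apply: IH; rewrite ?ti ?(ltnW tn) ?(ltnW t_lt).
apply: contra kept => /eqP ev_t; apply/discard_truthP; exists t; first by rewrite ti.
by rewrite nth_lfd_evictions.
Qed.

End LFDState.

Lemma count_discard_truth_le k tb I :
  count (discard_truth k tb I) (iota 0 (size I)) <= count isSome (lfd_evictions k tb I).
Proof.
set ev := lfd_evictions k tb I; set n := size I.
have sz : size ev = n by rewrite /ev /lfd_evictions size_lfd_run.
rewrite -(count_iota_nth None) sz -[leqRHS]addn0.
pose P i j := (i < j) && (j < next_req I i) && (nth None ev j == Some (nth 0 I i)).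
apply: (@count_iota_le_inj _ _ (fun i => find (P i) (iota 0 n))).
  move=> i i' /andP[ii' _] ti ti'.
  have [_ /andP[/andP[_ w_next] /eqP ev_w] _] := @find_iotaP (P i) n ti.
  have [_ /andP[/andP[i'w _] /eqP ev_w'] _] := @find_iotaP (P i') n ti'.
  apply/eqP => eq_w; rewrite -eq_w ev_w in ev_w'; case: ev_w' => eq_page.
  by have := next_req_le ii' (esym eq_page); rewrite -eq_w in i'w; lia.
move=> i _ ti; have [w_lt /andP[_ /eqP ev_w] _] := @find_iotaP (P i) n ti.
by rewrite w_lt ev_w.
Qed.

(* A request kept by LFD is charged to the next request to its page, which is an
   LFD hit, or to its page when there is none. *)
Lemma count_discard_kept_le k tb I : all (fun x => x <= k) I ->
  count (predC (discard_truth k tb I)) (iota 0 (size I)) +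
  count isSome (lfd_evictions k tb I) <= size I + k.+1.
Proof.
move=> Ik; set ev := lfd_evictions k tb I; set n := size I.
have sz : size ev = n by rewrite /ev /lfd_evictions size_lfd_run.
have -> : n + k.+1 = count isSome ev + (count (predC isSome) ev + k.+1).
  by rewrite addnA count_predC sz.
rewrite addnC leq_add2l -(count_iota_nth None) sz.
pose f i := if next_req I i < n then next_req I i else n + nth 0 I i.
apply: (@count_iota_le_inj _ (fun j => predC isSome (nth None ev j)) f n n k.+1).
  move=> i i' /andP[ii' i'n] _ _; rewrite /f; apply/eqP.
  have next_le := @next_req_le I i i' ii'; have next_gt := ltn_next_req I i'.
  case: (ltnP (next_req I i) n) => ri; case: (ltnP (next_req I i') n) => ri' eq_f.
  - move: next_le; rewrite -(nth_next_req ri') -eq_f (nth_next_req ri) => /(_ erefl).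
    by rewrite eq_f leqNgt next_gt.
  - by move: ri; rewrite eq_f ltnNge leq_addr.
  - by move: ri'; rewrite -eq_f ltnNge leq_addr.
  - by move/addnI: eq_f => /esym/next_le; rewrite leqNgt (leq_trans i'n ri).
move=> i i_lt /= kept; rewrite /f; case: ifP => [ri|_]; last first.
  by rewrite leq_addr ltn_add2l ltnS (allP Ik _ (mem_nth 0 i_lt)) orbT.
rewrite ri /= nth_lfd_evictions // /lfd_eviction (nth_next_req ri).
by rewrite (cached_until_next_req kept) // ?ltn_next_req ?leqnn // ltnW.
Qed.

(** * Phase predictions *)

Section Phases.
Variables (k : nat) (I : seq nat).

Definition phase_step (s : seq nat * nat) r : seq nat * nat :=
  if r \in s.1 then s else if size s.1 < k then (r :: s.1, s.2) else ([:: r], s.2.+1).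

(* The pages requested so far in the current phase, and the index of that phase,
   after the first t requests. *)
Fixpoint phase_state t : seq nat * nat :=
  if t is t'.+1 then phase_step (phase_state t') (nth 0 I t') else ([::], 0).

Local Notation pages t := (phase_state t).1.
Local Notation idx t := (phase_state t).2.

Lemma phase_run_state d j : size I = j + d ->
  phase_run k (pages j) (idx j) (drop j I) = [seq idx t.+1 | t <- iota j d].
Proof.
elim: d j => [|d IH] j sz; first by rewrite drop_oversize // sz addn0.
rewrite (drop_nth 0) ?sz /=; last lia.
rewrite -IH /=; last by rewrite sz addnS.
by rewrite /phase_step; case: ifP => //; case: ifP.
Qed.

Lemma phase_of_state t : t < size I -> phase_of k I t = idx t.+1.
Proof.
move=> lt; rewrite /phase_of /phase_ids -[I in phase_run _ _ _ I]drop0.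
by rewrite (@phase_run_state (size I) 0) // (nth_map 0) ?size_iota // nth_iota.
Qed.

Lemma phase_stateS t : idx t.+1 = idx t \/
  [/\ idx t.+1 = (idx t).+1, nth 0 I t \notin pages t, k <= size (pages t)
    & pages t.+1 = [:: nth 0 I t]].
Proof.
rewrite /= /phase_step; case: ifP => _; first by left.
by case: ltnP; [left | right].
Qed.

Lemma phase_pages_uniq t : uniq (pages t).
Proof.
elim: t => [|t uc] //=; rewrite /phase_step; case: ifP => // r_new.
by case: ifP => _ //=; rewrite r_new.
Qed.

Lemma phase_state_size t : 0 < k ->
  size (pages t) <= k /\ k * idx t + size (pages t) <= t.
Proof.
move=> k_gt0; elim: t => [|t [sz le]] /=; first by rewrite muln0.
rewrite /phase_step; case: ifP => _; first by split=> //; lia.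
by case: ltnP => /= size_k; rewrite ?mulnS; split=> //; lia.
Qed.

Lemma phase_idxS_le t : idx t.+1 <= (idx t).+1.
Proof. by case: (phase_stateS t) => [->|[-> _ _ _]]. Qed.

Lemma phase_idx_mono s t : s <= t -> idx s <= idx t.
Proof.
move/subnKC <-; elim: (t - s) => [|d IH]; first by rewrite addn0.
by rewrite addnS; apply: leq_trans IH _; case: (phase_stateS (s + d)) => [->|[-> _ _ _]].
Qed.

Lemma mem_phase_pages t x :
  (x \in pages t) = has (fun s => (idx s.+1 == idx t) && (nth 0 I s == x)) (iota 0 t).
Proof.
elim: t => [|t IH] //; rewrite -addn1 iotaD has_cat /= orbF add0n addn1.
case: (phase_stateS t) => [eq_idx|[eq_idx r_new _ ->]].
  rewrite eq_idx eqxx /= -IH; move: eq_idx; rewrite /= /phase_step.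
  case: ifP => [r_in _|r_new]; first by case: eqP => [<-|_]; rewrite ?r_in ?orbF.
  by case: ifP => /= _ => [_|]; [rewrite inE orbC eq_sym | lia].
rewrite eq_idx eqxx inE eq_sym /= (@eq_in_has _ _ pred0) ?has_pred0 // => s.
rewrite mem_iota add0n => /andP[_ st]; have := phase_idx_mono st.
by case: eqP => //= ->; lia.
Qed.

Definition phase_start t := idx t.+1 == (idx t).+1.

Definition phase_addition t := (nth 0 I t \notin pages t) && (size (pages t) < k).

Lemma count_phase_start t : count phase_start (iota 0 t) <= idx t.
Proof.
elim: t => [|t IH] //; rewrite -addn1 iotaD count_cat /= add0n addn1 addn0 /phase_start.
case: (phase_stateS t) => [->|[-> _ _ _]]; last by rewrite eqxx addn1.
by rewrite (_ : _ == _ = false) ?addn0 //; apply/eqP; lia.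
Qed.

Lemma count_phase_addition t : 0 < k ->
  count phase_addition (iota 0 t) <= k.-1 * idx t + size (pages t).
Proof.
move=> k_gt0; elim: t => [|t IH] //; rewrite -addn1 iotaD count_cat /= add0n addn0.
move: IH; rewrite addn1 /phase_addition /= /phase_step.
case: ifP => _ /= IH; first by rewrite addn0.
have [sz _] := phase_state_size t k_gt0.
by case: ltnP => /= size_k; lia.
Qed.

Lemma phase_addition_new t :
  nth 0 I t \notin pages t -> idx t.+1 = idx t -> phase_addition t.
Proof.
move=> r_new; rewrite /phase_addition r_new /= /phase_step (negbTE r_new).
by case: ltnP => //= _; lia.
Qed.

Lemma last_phase_of : 0 < size I -> phase_of k I (size I).-1 = idx (size I).
Proof. by move=> n_gt0; rewrite phase_of_state ?prednK // ltn_predL. Qed.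

Lemma counted_last i i' : counted k I i -> i < i' < size I ->
  phase_of k I i' = phase_of k I i -> nth 0 I i' != nth 0 I i.
Proof.
case/andP=> _ last_i /andP[ii' i'n] eq_ph; apply: contra last_i => /eqP eq_page.
by apply/hasP; exists i'; rewrite ?mem_iota ?ii' ?eq_ph ?eq_page ?eqxx.
Qed.

Local Notation n := (size I).

Lemma phase_pages_sub t : t <= n -> {subset pages t <= I}.
Proof.
move=> t_le x; rewrite mem_phase_pages => /hasP[s]; rewrite mem_iota => /andP[_ st].
by case/andP=> _ /eqP <-; rewrite mem_nth // (leq_trans st t_le).
Qed.

Lemma phase_start_full t : 0 < k -> phase_start t -> size (pages t) = k.
Proof.
move=> k_gt0 /eqP start; have [sz _] := phase_state_size t k_gt0.
case: (phase_stateS t) => [|[_ _ full _]]; first by rewrite start; lia.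
by apply/eqP; rewrite eqn_leq sz full.
Qed.

Lemma phase_truth_new i t : i < n -> t <= n -> phase_truth k I i ->
  idx t = (phase_of k I i).+1 -> nth 0 I i \notin pages t.
Proof.
move=> i_lt t_le truth idx_t; rewrite mem_phase_pages; apply: contra truth => /hasP[s].
rewrite mem_iota add0n => /andP[_ st] /andP[/eqP idx_s /eqP page_s].
have s_lt : s < n := leq_trans st t_le.
by apply/hasP; exists s; rewrite ?mem_iota ?s_lt // phase_of_state // idx_s idx_t page_s !eqxx.
Qed.

(* Charge the request to the first request to its page in the next phase, which
   adds a new page to that phase. *)
Lemma count_counted_kept :
  count (fun i => counted k I i && ~~ phase_truth k I i) (iota 0 n) <=
  count phase_addition (iota 0 n).
Proof.
rewrite -[leqRHS]addn0.
pose P i t := (phase_of k I t == (phase_of k I i).+1) && (nth 0 I t == nth 0 I i).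
apply: (@count_iota_le_inj _ phase_addition (fun i => find (P i) (iota 0 n)) n n 0).
  move=> i i' ii'n /andP[ci /negPn ti] /andP[ci' /negPn ti']; apply/eqP => eq_w.
  have [_ /andP[/eqP ph_w /eqP page_w] _] := @find_iotaP (P i) n ti.
  have [_ /andP[/eqP ph_w' /eqP page_w'] _] := @find_iotaP (P i') n ti'.
  rewrite -eq_w ph_w in ph_w'; rewrite -eq_w page_w in page_w'.
  case: ph_w' => eq_ph; move: (counted_last ci ii'n).
  by rewrite eq_ph page_w' eqxx => /(_ erefl).
move=> i i_lt /andP[ci /negPn ti]; apply/orP; left.
have [w_lt /andP[/eqP ph_w /eqP page_w] w_min] := @find_iotaP (P i) n ti.
move: (find _ _) w_lt ph_w page_w w_min => w w_lt ph_w page_w w_min.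
rewrite w_lt /=; rewrite phase_of_state // in ph_w.
have i_w : i < w.
  rewrite ltnNge; apply/negP => wi; have := phase_idx_mono (wi : w.+1 <= i.+1).
  by rewrite ph_w phase_of_state //; lia.
case: (phase_stateS w) => [same|[start w_new _ _]]; last first.
  move: w_new; rewrite mem_phase_pages => /hasP; case; exists i.
    by rewrite mem_iota add0n i_w.
  by rewrite -phase_of_state // -page_w eqxx andbT; move: start; rewrite ph_w => -[->].
have w_new : nth 0 I w \notin pages w.
  rewrite mem_phase_pages; apply/hasPn => s; rewrite mem_iota add0n => /andP[_ sw].
  by have := w_min s sw; rewrite /P phase_of_state ?(ltn_trans sw) // -same ph_w page_w.
exact: phase_addition_new w_new same.
Qed.

Definition phase_begin j := find (fun t => j <= idx t.+1) (iota 0 n).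

Lemma phase_beginP j : j.+1 <= idx n ->
  [/\ phase_begin j.+1 < n, idx (phase_begin j.+1) = j & idx (phase_begin j.+1).+1 = j.+1].
Proof.
move=> j_le; have n_gt0 : 0 < n.
  by rewrite lt0n; apply: contraTneq j_le => n0; rewrite n0 -ltnNge.
have reached : has (fun t => j.+1 <= idx t.+1) (iota 0 n).
  by apply/hasP; exists n.-1; [rewrite mem_iota add0n ltn_predL | rewrite prednK].
have [b_lt b_ge b_min] := find_iotaP reached; rewrite -/(phase_begin j.+1) in b_lt b_ge b_min.
have b_idx : idx (phase_begin j.+1) <= j.
  case E: (phase_begin j.+1) => [|b] //.
  by have := b_min b; rewrite E ltnSn -ltnNge => /(_ isT).
by have := phase_idxS_le (phase_begin j.+1); split=> //; lia.
Qed.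

(* A request of phase j whose page is absent from phase j + 1 is charged to the
   beginning of phase j + 2: phase j + 1 is then full, so it misses only one of
   the k + 1 pages.  Without a phase j + 2, j is the second-to-last phase and
   the request is charged to its page. *)
Lemma count_counted_fresh : 0 < k -> all (fun x => x <= k) I ->
  count (fun i => counted k I i && phase_truth k I i) (iota 0 n) <=
  count phase_start (iota 0 n) + k.+1.
Proof.
move=> k_gt0 Ik; pose f i := let j := (phase_of k I i).+2 in
  if j <= idx n then phase_begin j else n + nth 0 I i.
apply: (@count_iota_le_inj _ phase_start f n n k.+1).
  move=> i i' ii'n /andP[ci ti] /andP[ci' ti']; apply/eqP => eq_f.
  have [i_lt i'_lt] : i < n /\ i' < n by case/andP: ii'n => ii' i'n; rewrite (ltn_trans ii').
  suff [eq_ph eq_page] : phase_of k I i' = phase_of k I i /\ nth 0 I i' = nth 0 I i.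
    by move: (counted_last ci ii'n eq_ph); rewrite eq_page eqxx.
  move: eq_f; rewrite /f /=; case: ifP => [far|near]; case: ifP => [far'|near'].
  - move=> eq_b; have [b_lt b_idx b_idxS] := phase_beginP far.
    have [_ b_idx' _] := phase_beginP far'; rewrite -eq_b b_idx in b_idx'.
    case: b_idx' => eq_ph; split=> //.
    have b_start : phase_start (phase_begin (phase_of k I i).+2).
      by rewrite /phase_start b_idx b_idxS.
    have uc := phase_pages_uniq (phase_begin (phase_of k I i).+2).
    apply: (full_cache_misses_one uc _ (phase_start_full k_gt0 b_start)).
    + by apply/allP => x /(phase_pages_sub (ltnW b_lt)) /(allP Ik).
    + by apply: phase_truth_new => //; [exact: ltnW | rewrite b_idx eq_ph].
    + by apply: phase_truth_new => //; exact: ltnW.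
    + exact: (allP Ik) (mem_nth 0 i'_lt).
    + exact: (allP Ik) (mem_nth 0 i_lt).
  - by have [b_lt _ _] := phase_beginP far => eq_b; move: b_lt; rewrite eq_b ltnNge leq_addr.
  - by have [b_lt _ _] := phase_beginP far' => eq_b; move: b_lt; rewrite -eq_b ltnNge leq_addr.
  - move/addnI => eq_page; split=> //.
    have n_gt0 : 0 < n := leq_ltn_trans (leq0n i') i'_lt.
    move: ci ci' near near'; rewrite /counted (last_phase_of n_gt0).
    by move=> /andP[ph_i _] /andP[ph_i' _] /negbT near /negbT near'; lia.
move=> i i_lt _; rewrite /f /=; case: ifP => [far|_]; last first.
  by rewrite leq_addr ltn_add2l ltnS (allP Ik _ (mem_nth 0 i_lt)) orbT.
have [b_lt b_idx b_idxS] := phase_beginP far.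
by rewrite b_lt /phase_start b_idx b_idxS eqxx.
Qed.

End Phases.

Lemma phase_fresh_bound k I : 0 < k -> all (fun x => x <= k) I ->
  k * count (fun i => counted k I i && phase_truth k I i) (iota 0 (size I)) <=
  size I + k * k.+1.
Proof.
move=> k_gt0 Ik; have [_ phases_le] := @phase_state_size k I (size I) k_gt0.
have := leq_add (@count_phase_start k I (size I)) (leqnn k.+1).
move/(leq_trans (count_counted_fresh k_gt0 Ik))/(leq_mul (leqnn k)).
rewrite mulnDr => le; apply: leq_trans le _.
by rewrite leq_add2r (leq_trans _ phases_le) ?leq_addr.
Qed.

Lemma phase_kept_bound k I : 0 < k ->
  k * count (fun i => counted k I i && ~~ phase_truth k I i) (iota 0 (size I)) <=
  k.-1 * size I + k * k.
Proof.
move=> k_gt0; have [sz phases_le] := @phase_state_size k I (size I) k_gt0.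
have := leq_trans (@count_counted_kept k I) (@count_phase_addition k I (size I) k_gt0).
move=> /(leq_mul (leqnn k)); rewrite mulnDr mulnCA => le; apply: leq_trans le _.
apply: leq_add; last exact: leq_mul.
by rewrite leq_mul2l (leq_trans _ phases_le) ?leq_addr ?orbT.
Qed.

Lemma eta_discard_all0 k tb I :
  eta_discard k tb I (fun=> false) false =
    count (discard_truth k tb I) (iota 0 (size I)) /\
  eta_discard k tb I (fun=> false) true = 0.
Proof. by split; [apply: eq_count => i /=; case: discard_truth | apply: count_pred0]. Qed.

Lemma eta_discard_all1 k tb I :
  eta_discard k tb I (fun=> true) true =
    count (predC (discard_truth k tb I)) (iota 0 (size I)) /\
  eta_discard k tb I (fun=> true) false = 0.
Proof. by split; [apply: eq_count => i /=; case: discard_truth | apply: count_pred0]. Qed.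

Lemma eta_discard_exact k tb I h : eta_discard k tb I (discard_truth k tb I) h = 0.
Proof.
rewrite /eta_discard (eq_count (a2 := pred0)) ?count_pred0 // => i /=.
by case: discard_truth; case: h.
Qed.

Lemma eta_phase_all0 k I :
  eta_phase k I (fun=> false) false =
    count (fun i => counted k I i && phase_truth k I i) (iota 0 (size I)) /\
  eta_phase k I (fun=> false) true = 0.
Proof.
split; first by apply: eq_count => i /=; case: phase_truth; rewrite ?andbT ?andbF.
by rewrite /eta_phase (eq_count (a2 := pred0)) ?count_pred0 // => i /=; rewrite andbF.
Qed.

Lemma eta_phase_all1 k I :
  eta_phase k I (fun=> true) true =
    count (fun i => counted k I i && ~~ phase_truth k I i) (iota 0 (size I)) /\
  eta_phase k I (fun=> true) false = 0.
Proof.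
split; first by apply: eq_count => i /=; case: phase_truth; rewrite ?andbT ?andbF.
by rewrite /eta_phase (eq_count (a2 := pred0)) ?count_pred0 // => i /=; rewrite andbF.
Qed.

Lemma eta_phase_exact k I h : eta_phase k I (phase_truth k I) h = 0.
Proof.
rewrite /eta_phase (eq_count (a2 := pred0)) ?count_pred0 // => i /=.
by case: phase_truth; case: h; rewrite ?andbF.
Qed.

(** * Lower bounds on the competitive ratio *)

Lemma INR_muln m n : INR (m * n) = (INR m * INR n)%R.
Proof. exact: mult_INR. Qed.

Lemma le_INR_scaled (c : R) (m n : nat) :
  (0 <= c)%R -> m <= n -> (c * INR m <= c * INR n)%R.
Proof. by move=> c_ge0 /leP /le_INR; apply: Rmult_le_compat_l. Qed.

Lemma not_competitive_of_linear_bound k A eta (a bt g c D : R) : (c < INR k)%R ->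
  (forall n, exists I p, alg_cost k A I p = n /\
     (INR k * (a * INR (OPT k I) + bt * INR (eta I p false) + g * INR (eta I p true))
        <= c * INR n + D)%R) ->
  ~ competitive k A eta a bt g.
Proof.
move=> c_lt hard [b comp].
have [n n_large] := INR_archimed (INR k - c) (D + INR k * b) ltac:(lra).
have [I [p [cost bound]]] := hard n.
have := Rmult_le_compat_l _ _ _ (pos_INR k) (comp I p); rewrite cost.
by rewrite Rmult_plus_distr_l; lra.
Qed.

Lemma not_competitive_of_hard_instances k A eta q (a bt g c D : R) :
  0 < k -> (c < INR k)%R ->
  (forall I, all (fun x => x <= k) I ->
     (INR k * (a * INR (OPT k I) + bt * INR (eta I (fun=> q) false)
                 + g * INR (eta I (fun=> q) true)) <= c * INR (size I) + D)%R) ->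
  ~ competitive k A eta a bt g.
Proof.
move=> k_gt0 c_lt bound; apply: (not_competitive_of_linear_bound (D := D) c_lt) => n.
have [I [sz Ik cost]] := cruel_instance A q n k_gt0.
by exists I, (fun=> q); split=> //; rewrite -sz; exact: bound.
Qed.

Lemma not_competitive_of_exact_predictions k A eta (a bt g : R) :
  0 < k -> (0 <= a < 1)%R ->
  (forall I, exists p, eta I p false = 0 /\ eta I p true = 0) ->
  ~ competitive k A eta a bt g.
Proof.
move=> k_gt0 [a_ge0 a_lt1] exact_p.
have k_pos : (0 < INR k)%R by apply/lt_0_INR/ltP.
apply: (@not_competitive_of_linear_bound _ _ _ _ _ _ (INR k * a) 0); first nra.
move=> n; have [p [eta0 eta1]] := exact_p (iota 0 n).
exists (iota 0 n), p; split; first exact: alg_cost_iota.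
rewrite eta0 eta1; have := le_INR_scaled a_ge0 (opt_from_le_size k [::] (iota 0 n)).
rewrite size_iota -/(OPT k (iota 0 n)) /= => opt_le; nra.
Qed.

Lemma discard_not_competitive_beta k tb A (a bt g : R) :
  0 < k -> (0 <= a)%R -> (0 <= bt)%R -> (a + bt < INR k)%R ->
  ~ competitive k A (eta_discard k tb) a bt g.
Proof.
move=> k_gt0 a_ge0 bt_ge0 lt.
apply: (not_competitive_of_hard_instances (q := false)
          (D := a * INR (k * k.+1) + bt * INR k) k_gt0 lt) => I Ik.
have [-> ->] := eta_discard_all0 k tb I.
have [_ spacing] := lfd_evictions_bounds tb k_gt0 Ik.
have truth_le : k * count (discard_truth k tb I) (iota 0 (size I)) <= size I + k.
  exact: leq_trans (leq_mul (leqnn k) (count_discard_truth_le k tb I)) spacing.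
have opt := le_INR_scaled a_ge0 (OPT_kS_pages_le k_gt0 Ik).
have truth := le_INR_scaled bt_ge0 truth_le.
rewrite !plus_INR !INR_muln in opt truth; rewrite INR_0 ?INR_muln; lra.
Qed.

Lemma discard_not_competitive_gamma k tb A (a bt g : R) :
  0 < k -> (1 <= a)%R -> (0 <= g)%R -> (a + (INR k - 1) * g < INR k)%R ->
  ~ competitive k A (eta_discard k tb) a bt g.
Proof.
move=> k_gt0 a_ge1 g_ge0 lt.
have k_ge1 : (1 <= INR k)%R by apply: (le_INR 1); apply/leP.
have g_le_a : (g <= a)%R by nra. (* since (k - 1) g < k - a <= k - 1 *)
apply: (not_competitive_of_hard_instances (q := true)
          (D := a * INR (k * k) + a * INR k + g * INR (k * k)) k_gt0 lt) => I Ik.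
have [-> ->] := eta_discard_all1 k tb I.
have [opt_le spacing] := lfd_evictions_bounds tb k_gt0 Ik.
have kept_le := count_discard_kept_le tb Ik.
set S := count isSome _ in opt_le spacing kept_le.
have opt := le_INR_scaled (ltac:(nra) : (0 <= a * INR k)%R) opt_le.
have kept := le_INR_scaled (ltac:(nra) : (0 <= g * INR k)%R) kept_le.
have evict := le_INR_scaled (ltac:(lra) : (0 <= a - g)%R) spacing.
rewrite !plus_INR !INR_muln ?S_INR in opt kept evict; rewrite INR_0 ?INR_muln; lra.
Qed.

Lemma phase_not_competitive_beta k A (a bt g : R) :
  0 < k -> (0 <= a)%R -> (0 <= bt)%R -> (a + bt < INR k)%R ->
  ~ competitive k A (eta_phase k) a bt g.
Proof.
move=> k_gt0 a_ge0 bt_ge0 lt.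
apply: (not_competitive_of_hard_instances (q := false)
          (D := (a + bt) * INR (k * k.+1)) k_gt0 lt) => I Ik.
have [-> ->] := eta_phase_all0 k I.
have opt := le_INR_scaled a_ge0 (OPT_kS_pages_le k_gt0 Ik).
have fresh := le_INR_scaled bt_ge0 (phase_fresh_bound k_gt0 Ik).
rewrite !plus_INR !INR_muln in opt fresh; rewrite INR_0 ?INR_muln; lra.
Qed.

Lemma phase_not_competitive_gamma k A (a bt g : R) :
  0 < k -> (0 <= a)%R -> (0 <= g)%R -> (a + (INR k - 1) * g < INR k)%R ->
  ~ competitive k A (eta_phase k) a bt g.
Proof.
move=> k_gt0 a_ge0 g_ge0 lt.
apply: (not_competitive_of_hard_instances (q := true)
          (D := a * INR (k * k.+1) + g * INR (k * k)) k_gt0 lt) => I Ik.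
have [-> ->] := eta_phase_all1 k I.
have k_pred : INR k.-1 = (INR k - 1)%R by rewrite -subn1 minus_INR //; apply/leP.
have opt := le_INR_scaled a_ge0 (OPT_kS_pages_le k_gt0 Ik).
have kept := le_INR_scaled g_ge0 (phase_kept_bound I k_gt0).
rewrite !plus_INR !INR_muln ?k_pred in opt kept; rewrite INR_0 ?INR_muln; lra.
Qed.

Theorem theorem5 (k : nat) (hk : (1 <= k)%N) (a bt g : R)
  (ha : (0 <= a)%R) (hbt : (0 <= bt)%R) (hg : (0 <= g)%R)
  (hlt : (a + bt < INR k)%R \/ (a + (INR k - 1) * g < INR k)%R) :
  (forall (tb : TieRule) (A : Alg), ~ competitive k A (eta_discard k tb) a bt g) /\
  (forall A : Alg, ~ competitive k A (eta_phase k) a bt g).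
Proof.
have exact_discard tb I :
    exists p, eta_discard k tb I p false = 0 /\ eta_discard k tb I p true = 0.
  by exists (discard_truth k tb I); rewrite !eta_discard_exact.
have exact_phase I : exists p, eta_phase k I p false = 0 /\ eta_phase k I p true = 0.
  by exists (phase_truth k I); rewrite !eta_phase_exact.
split=> [tb|] A; have [a_lt1|a_ge1] := Rlt_le_dec a 1.
- exact: not_competitive_of_exact_predictions (exact_discard tb).
- by case: hlt; [exact: discard_not_competitive_beta | exact: discard_not_competitive_gamma].
- exact: not_competitive_of_exact_predictions exact_phase.
- by case: hlt; [exact: phase_not_competitive_beta | exact: phase_not_competitive_gamma].
Qed.
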